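(* Let $F$ be a chordal graph. (b) For every function $f:\wp(V_F)\to\mathbb R$, \[ \sum_{S\subseteq\mathsf{MaxCliques}(F)} -(-1)^{|S|} f\big({\textstyle\bigcap}S\big)=\sum_{A\subseteq V_F}(L_{V_F}f)(A)\cdot\mathsf{CC}(F|_A). \] (c) For every graph $G$, every homomorphism $\varphi:F\to G$, and every function $g:\wp(V_G)\to\mathbb R$, \[ \sum_{S\subseteq\mathsf{MaxCliques}(F)} -(-1)^{|S|} g\big(\varphi({\textstyle\bigcap}S)\big)=\sum_{A\subseteq V_G}(L_{V_G}g)(A)\cdot\mathsf{CC}\big(F|_{\varphi^{-1}(A)}\big). \]
   Context: Graphs are finite directed graphs; cliques, chordality, connectivity refer to the underlying simple undirected graph (edges $\{v,w\}$, $v\ne w$, with $(v,w)$ or $(w,v)$ an edge). $\mathsf{MaxCliques}(F)$ is the set of maximal cliques; $\bigcap S$ is the intersection of the family $S$, with $\bigcap\emptyset=\emptyset$; $\varphi(A)$ is the image of $A$. $F$ is chordal if its underlying simple graph has no induced cycle of length $\ge4$. $F|_A$ is the induced subgraph on $A$ and $\mathsf{CC}$ its number of connected components, with $\mathsf{CC}(F|_\emptyset)=0$. For a finite set $V$ and $f:\wp(V)\to\mathbb R$, $L_Vf:\wp(V)\to\mathbb R$ is defined by $(L_Vf)(A)=\sum_{B\subseteq V:\,A\cup B=V} -(-1)^{|A\cap B|} f(B)$. *)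

From HB Require Import structures.
From mathcomp Require Import all_boot all_order all_algebra.
Set Implicit Arguments. Unset Strict Implicit. Unset Printing Implicit Defensive.
Import Order.TTheory GRing.Theory Num.Theory.

(* A finite directed graph: a finType T of vertices with edge relation e : rel T.
   Cliques, chordality, connectivity refer to the underlying simple graph. *)

Definition uadj (T : finType) (e : rel T) (x y : T) : bool :=
  (x != y) && (e x y || e y x).

Definition is_clique (T : finType) (e : rel T) (A : {set T}) : bool :=
  [forall x in A, forall y in A, (x != y) ==> uadj e x y].

Definition MaxCliques (T : finType) (e : rel T) : {set {set T}} :=
  [set A | maxset (is_clique e) A].

Definition induced_cycle (T : finType) (e : rel T) (s : seq T) : Prop :=
  [/\ uniq s, 4 <= size s &
      forall (x0 : T) i j, i < size s -> j < size s ->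
        uadj e (nth x0 s i) (nth x0 s j)
        = ((j == i.+1 %% size s) || (i == j.+1 %% size s))].

Definition chordal (T : finType) (e : rel T) : Prop :=
  forall s : seq T, ~ induced_cycle e s.

(* intersection of a family, with the convention  \bigcap set0 = set0 *)
Definition bigcapS (T : finType) (S : {set {set T}}) : {set T} :=
  if S == set0 then set0 else \bigcap_(X in S) X.

Definition induced_adj (T : finType) (e : rel T) (A : {set T}) : rel T :=
  [rel x y | [&& x \in A, y \in A & uadj e x y]].

Definition CC (T : finType) (e : rel T) (A : {set T}) : nat :=
  #| [set [set y in A | connect (induced_adj e A) x y] | x in A] |.

Local Open Scope ring_scope.

Definition LV (R : nzRingType) (T : finType) (f : {set T} -> R) (A : {set T}) : R :=
  \sum_(B : {set T} | A :|: B == setT) - ((-1) ^+ #|A :&: B|) * f B.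

(* For chordal F, the signed clique count of F|_A (empty clique included)
   equals 1 - CC(F|_A).  Deleting a vertex v of A changes the count by that of
   its neighbourhood N in A, and CC by the matching amount: the components of
   F|_(A \ v) meeting N are exactly those of F|_N, since a shortest path
   avoiding v between two neighbours of v, with no interior neighbour of v,
   would close an induced cycle through v.  A nonempty Q is a clique iff some
   maximal clique contains it, so inclusion-exclusion over families S of
   maximal cliques turns the signed sum of [bigcap S meets A] into the same
   clique count.  Finally L_V g summed against [X meets A] gives
   g X - g set0, and the g set0 terms cancel since MaxCliques(F) is nonempty. *)

From mathcomp Require Import all_boot all_algebra zify.
From Stdlib Require Import Classical.
Import GRing.Theory.
Set Implicit Arguments. Unset Strict Implicit. Unset Printing Implicit Defensive.

Section PathSurgery.
Variables (T : Type) (r : rel T).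

Lemma last_take (x : T) p i : i <= size p -> last x (take i p) = nth x (x :: p) i.
Proof.
move=> le_ip; rewrite (last_nth x) size_takel //.
by case: i le_ip => //= i lt_ip; rewrite nth_take.
Qed.

Lemma path_drop (x : T) p i :
  path r x p -> i <= size p -> path r (nth x (x :: p) i) (drop i p).
Proof.
by move=> rp le_ip; move: rp; rewrite -{1}(cat_take_drop i p) cat_path last_take // => /andP[].
Qed.

Lemma last_drop (x : T) p i : i <= size p -> last (nth x (x :: p) i) (drop i p) = last x p.
Proof. by move=> le_ip; rewrite -last_take // -last_cat cat_take_drop. Qed.

Lemma path_splice (x : T) p i q :
  path r x p -> i <= size p -> path r (nth x (x :: p) i) q ->
  path r x (take i p ++ q) /\ last x (take i p ++ q) = last (nth x (x :: p) i) q.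
Proof. by move=> rp le_ip rq; rewrite cat_path last_cat last_take // take_path. Qed.

End PathSurgery.

Lemma modnS_small m k : k <= m -> k.+1 %% m.+1 = if k == m then 0 else k.+1.
Proof.
case: eqP => [-> _|ne_km le_km]; first exact: modnn.
by rewrite modn_small // ltnS ltn_neqAle le_km andbT; apply/eqP.
Qed.

Lemma card_imset_eq_kernel (aT rT rT' : finType) (D : {set aT})
    (f : aT -> rT) (g : aT -> rT') :
  {in D &, forall x y, (f x == f y) = (g x == g y)} -> #|f @: D| = #|g @: D|.
Proof.
move=> fg; have [->|[x0 Dx0]] := set_0Vmem D; first by rewrite !imset0 !cards0.
pose h u := if [pick x in D | f x == u] is Some x then g x else g x0.
have hf x : x \in D -> h (f x) = g x.
  move=> Dx; rewrite /h; case: pickP => [y /andP[Dy /eqP fyx]|/(_ x)].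
    by apply/eqP; rewrite -fg // fyx.
  by rewrite Dx eqxx.
have -> : g @: D = h @: (f @: D).
  by rewrite -imset_comp; apply: eq_in_imset => x Dx; rewrite /= hf.
apply/esym/card_in_imset => _ _ /imsetP[x Dx ->] /imsetP[y Dy ->].
by rewrite !hf // => /eqP; rewrite -fg // => /eqP.
Qed.

Section Graph.
Variables (T : finType) (e : rel T).
Implicit Types (A B : {set T}) (v x y : T).

Lemma uadj_sym x y : uadj e x y = uadj e y x.
Proof. by rewrite /uadj eq_sym orbC. Qed.

Lemma uadjxx x : uadj e x x = false.
Proof. by rewrite /uadj eqxx. Qed.

Lemma induced_path_sub B x p :
  x \in B -> path (induced_adj e B) x p -> {subset x :: p <= B}.
Proof.
elim: p x => [|y p IH] x Bx /=; first by move=> _ z; rewrite mem_seq1 => /eqP->.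
case/andP=> /and3P[_ By _] rp z; rewrite in_cons => /predU1P[-> //|]; exact: IH.
Qed.

Definition induced_path (s : seq T) : Prop :=
  uniq s /\ forall x0 i j, i < size s -> j < size s ->
    uadj e (nth x0 s i) (nth x0 s j) = (j == i.+1) || (i == j.+1).

Lemma shortest_path_induced B x p :
  x \in B -> path (induced_adj e B) x p ->
  (forall q, path (induced_adj e B) x q -> last x q = last x p -> size p <= size q) ->
  induced_path (x :: p).
Proof.
set r := induced_adj e B => Bx rp p_min; set s := x :: p.
have memB k : k < size s -> nth x s k \in B.
  by move=> lt_ks; apply: (induced_path_sub Bx rp); apply: mem_nth.
(* Cutting out the segment between a repeated vertex, or spanned by a chord,
   would shorten the path. *)
have no_shortcut i j : i < j <= size p -> path r (nth x s i) (drop j p) ->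
    last (nth x s i) (drop j p) = last x p -> False.
  case/andP=> lt_ij le_jp rq lastq.
  have [rq' lastq'] := path_splice rp (ltnW (leq_trans lt_ij le_jp)) rq.
  have := p_min _ rq'; rewrite lastq' lastq => /(_ erefl).
  by rewrite size_cat size_takel ?(ltnW (leq_trans lt_ij le_jp)) // size_drop; lia.
split.
  apply/negPn/negP => /(uniqPn x) [i [j [lt_ij lt_js eq_ij]]].
  by apply: (no_shortcut i j); rewrite ?lt_ij ?eq_ij ?path_drop ?last_drop.
move=> x0 i j lt_is lt_js; rewrite !(set_nth_default x) //.
wlog le_ij : i j lt_is lt_js / i <= j.
  move=> wlog_ij; case: (leqP i j) => [|/ltnW le_ji]; first exact: wlog_ij.
  by rewrite uadj_sym orbC wlog_ij.
case: (ltngtP i j) le_ij => // [lt_ij _|-> _]; last by rewrite uadjxx ltn_eqF.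
rewrite (ltn_eqF (leqW lt_ij)) orbF.
case: j lt_ij lt_js => // j lt_ij lt_js; rewrite ltnS in lt_ij.
have {lt_js} lt_jp : j < size p by [].
case: (eqVneq i j) => [->|ne_ij].
  by rewrite eqxx; move/(pathP x): rp => /(_ j lt_jp) /and3P[].
rewrite eqSS eq_sym (negbTE ne_ij); apply/negbTE/negP => adj_ij.
have lt_ij' : i < j by rewrite ltn_neqAle ne_ij.
apply: (no_shortcut i j); first by rewrite lt_ij' ltnW.
- have Bj : nth x p j \in B := memB j.+1 lt_jp.
  rewrite (drop_nth x lt_jp) /= /r /induced_adj /= memB // Bj adj_ij /=.
  exact: (path_drop _ lt_jp).
- by rewrite (drop_nth x lt_jp) /= (last_drop _ lt_jp).
Qed.

Lemma induced_cycle_cons v s :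
  induced_path s -> 3 <= size s -> v \notin s ->
  (forall x0 i, i < size s -> uadj e v (nth x0 s i) = (i == 0) || (i == (size s).-1)) ->
  induced_cycle e (v :: s).
Proof.
move=> [uniq_s adj_s] ge3_s vNs adj_v; split=> //=; first by rewrite vNs.
move=> x0 [|i] [|j]; rewrite !ltnS => le_is le_js; rewrite !modnS_small //=.
- by rewrite uadjxx; case: ifP => /eqP; [lia|].
- by rewrite adj_v //; do 2 case: ifP => /eqP; lia.
- by rewrite uadj_sym adj_v //; do 2 case: ifP => /eqP; lia.
- by rewrite adj_s //; do 2 case: ifP => /eqP; lia.
Qed.

Definition nbhd A v := [set w in A | uadj e v w].

Lemma nbhd_sub A v : nbhd A v \subset A.
Proof. by apply/subsetP => w; rewrite inE => /andP[]. Qed.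

Lemma nbhd_setD1 A v : nbhd (A :\ v) v = nbhd A v.
Proof.
by apply/setP=> w; rewrite !inE -andbA; case: eqP => [->|_] /=; rewrite ?uadjxx ?andbF.
Qed.

Lemma nbhd_subD1 A v : nbhd A v \subset A :\ v.
Proof. by rewrite -nbhd_setD1 nbhd_sub. Qed.

Lemma chordal_induced_path v s :
  chordal e -> induced_path s -> 3 <= size s -> v \notin s ->
  uadj e v (head v s) -> uadj e v (last v s) ->
  exists2 i, 0 < i < (size s).-1 & uadj e v (nth v s i).
Proof.
move=> chordal_e ind_s ge3_s vNs adj_head adj_last.
case: (classic (exists2 i, 0 < i < (size s).-1 & uadj e v (nth v s i))) => // no_i.
case: (chordal_e (v :: s)); apply: induced_cycle_cons => // x0 i lt_is.
rewrite (set_nth_default v) //; case: (posnP i) => [->|i_gt0]; first by rewrite nth0 adj_head.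
case: (eqVneq i (size s).-1) => [->|ne_is]; first by rewrite nth_last adj_last orbT.
apply/negbTE/negP => adj_vi; apply: no_i.
by exists i; rewrite // i_gt0 ltn_neqAle ne_is -ltnS prednK ?(leq_ltn_trans _ lt_is).
Qed.

Local Notation conn B := (connect (induced_adj e B)).

Lemma chordal_nbhd_connect B v :
  chordal e -> v \notin B -> {in nbhd B v &, forall x y, conn B x y -> conn (nbhd B v) x y}.
Proof.
set N := nbhd B v; set r := induced_adj e B => chordal_e vNB x y Nx Ny /connectP[p rp yE].
rewrite {y}yE in Ny *; move: Ny.
have [n lt_pn] := ubnP (size p); elim: n => // n IH in x p lt_pn Nx rp *.
have Bx : x \in B := subsetP (nbhd_sub B v) x Nx.
case: (ltnP 1 (size p)) => [gt1_p|]; last first.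
  case: p => [|y [|//]] in lt_pn rp * => _ Ny; first exact: connect0.
  by apply/connect1/and3P; split=> //; case/andP: rp => /and3P[].
case: (classic (exists q, [/\ path r x q, last x q = last x p & size q < size p]))
    => [[q [rq lastq lt_qp]] Np|p_min Np].
  by rewrite -lastq; apply: IH => //; [lia | rewrite lastq].
have {}p_min q : path r x q -> last x q = last x p -> size p <= size q.
  by move=> rq lastq; rewrite leqNgt; apply/negP => lt_qp; apply: p_min; exists q.
have sub_s := induced_path_sub Bx rp.
(* A shortest path is induced, so chordality provides an interior neighbour of
   v, where the path splits into two shorter ones. *)
have [|||i /andP[i_gt0 lt_ip] adj_vi] :=
  @chordal_induced_path v (x :: p) chordal_e (shortest_path_induced Bx rp p_min) gt1_p.
- by apply/negP => /sub_s; apply/negP.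
- by case/setIdP: Nx.
- by case/setIdP: Np.
have {lt_ip} lt_ip : i < size p by [].
have le_ip := ltnW lt_ip.
have Ni : nth x (x :: p) i \in N by rewrite inE sub_s ?mem_nth // (set_nth_default v).
apply: (@connect_trans _ _ (nth x (x :: p) i)).
  rewrite -(last_take x le_ip); apply: IH; rewrite ?take_path ?last_take //.
  by rewrite size_takel //; lia.
rewrite -(last_drop x le_ip); apply: IH; rewrite ?path_drop ?last_drop //.
by rewrite size_drop; lia.
Qed.

Definition component B x := [set y in B | conn B x y].

Lemma induced_adj_sym B : symmetric (induced_adj e B).
Proof. by move=> x y; rewrite /induced_adj /= uadj_sym andbCA. Qed.

Lemma conn_sym B x y : conn B x y = conn B y x.
Proof. exact/sym_connect_sym/induced_adj_sym. Qed.

Lemma conn1 B x y : x \in B -> y \in B -> uadj e x y -> conn B x y.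
Proof. by move=> Bx By xy; apply/connect1/and3P. Qed.

Lemma conn_sub B B' x y : B \subset B' -> conn B x y -> conn B' x y.
Proof.
move=> sBB'; apply: connect_sub => {}x {}y /and3P[Bx By xy].
by apply: conn1; rewrite ?(subsetP sBB').
Qed.

Lemma component_eq B x y : x \in B -> y \in B ->
  (component B x == component B y) = conn B x y.
Proof.
move=> Bx By; apply/eqP/idP => [comp_xy|conn_xy].
  have : y \in component B y by rewrite inE By connect0.
  by rewrite -comp_xy inE => /andP[].
apply/setP=> z; rewrite !inE; case: (z \in B) => //=.
by apply/idP/idP; apply: connect_trans; rewrite // conn_sym.
Qed.

Lemma CC0 : CC e set0 = 0.
Proof. by rewrite /CC imset0 cards0. Qed.

Lemma CC_component B : CC e B = #|component B @: B|.
Proof. by []. Qed.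

Lemma component_setD1 A v x : ~~ conn A x v -> component A x = component (A :\ v) x.
Proof.
move=> nxv; apply/setP=> z; rewrite !inE.
apply/andP/andP => [[Az /connectP[p rp zE]]|[/andP[_ Az] conn_xz]]; last first.
  by split; last exact: conn_sub (subsetDl _ _) conn_xz.
have avoid_v : all (predC1 v) (x :: p).
  apply/allP => w /(path_connect rp) conn_xw /=.
  by apply: contraNneq nxv => wv; rewrite -wv.
split; first by rewrite Az andbT zE; apply: (allP avoid_v); apply: mem_last.
apply/connectP; exists p => //; apply: sub_in_path avoid_v rp.
by move=> a b; rewrite !inE => av bv /and3P[Aa Ab ab]; apply/and3P; rewrite !inE av bv.
Qed.

Lemma conn_center_nbhd A v x : v \in A -> x \in A :\ v ->
  conn A x v = (component (A :\ v) x :&: nbhd A v != set0).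
Proof.
move=> Av A'x; apply/idP/set0Pn => [/connectP[p rp vE]|[y]]; last first.
  rewrite !inE => /andP[/andP[A'y conn_xy] /andP[Ay vy]].
  apply: connect_trans (conn_sub (subsetDl A [set v]) conn_xy) _.
  by rewrite conn_sym conn1.
elim: p x A'x rp vE => [|z p IH] x A'x /=.
  by move=> _ vx; move: A'x; rewrite -vx !inE eqxx.
case/andP=> /and3P[Ax Az xz] rp vE.
have [zv|nzv] := eqVneq z v.
  exists x; rewrite /component /nbhd !inE -zv uadj_sym xz Ax connect0 !andbT.
  by move: A'x; rewrite zv !inE => /andP[].
have A'z : z \in A :\ v by rewrite !inE nzv.
have [y] := IH z A'z rp vE; rewrite !inE => /andP[/andP[A'y conn_zy] Ny].
exists y; rewrite !inE A'y Ny andbT.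
by apply: connect_trans conn_zy; apply: conn1.
Qed.

Lemma CC_setD1 A v : v \in A ->
  {in nbhd A v &, forall x y, conn (A :\ v) x y -> conn (nbhd A v) x y} ->
  CC e (A :\ v) + 1 = CC e (nbhd A v) + CC e A.
Proof.
set A' := A :\ v; set N := nbhd A v => Av nbhd_conn.
have sNA' : N \subset A' := nbhd_subD1 A v.
(* The components of A' meeting N are those of N, the others are those of A
   except the one of v. *)
set Q := [set C : {set T} | C :&: N != set0].
have meet_N : component A' @: A' :&: Q = component A' @: N.
  apply/setP=> C; rewrite !inE; apply/andP/imsetP => [[/imsetP[x A'x ->]]|[y Ny ->]].
    case/set0Pn=> y /setIP[/setIdP[A'y conn_xy] Ny].
    by exists y => //; apply/eqP; rewrite component_eq.
  split; first by rewrite imset_f ?(subsetP sNA').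
  by apply/set0Pn; exists y; rewrite in_setI Ny andbT inE (subsetP sNA') ?connect0.
have avoid_N : component A' @: A' :\: Q = component A @: A :\ component A v.
  apply/setP=> C; rewrite !inE.
  apply/andP/andP => [[nmeet /imsetP[x A'x CE]]|[ncomp /imsetP[x Ax CE]]]; subst C.
    have Ax : x \in A by move: A'x; rewrite inE => /andP[].
    have nxv : ~~ conn A x v by rewrite (conn_center_nbhd Av A'x).
    by rewrite -(component_setD1 nxv) component_eq // nxv imset_f.
  have nxv : ~~ conn A x v by rewrite -component_eq.
  have A'x : x \in A'.
    by rewrite /A' !inE Ax andbT; apply: contraNneq nxv => ->; apply: connect0.
  by rewrite (component_setD1 nxv) -(conn_center_nbhd Av A'x) nxv imset_f.
rewrite !CC_component -(cardsID Q) meet_N avoid_N.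
rewrite (cardsD1 (component A v) (component A @: A)) imset_f //.
rewrite (@card_imset_eq_kernel _ _ _ N _ (component N)); first by rewrite -addnA addn1.
move=> x y Nx Ny; rewrite !component_eq ?(subsetP sNA') //.
by apply/idP/idP; [apply: nbhd_conn | apply: conn_sub].
Qed.

End Graph.

Local Open Scope ring_scope.

Section SignSums.
Variables (R : nzRingType) (U : finType).
Implicit Types (X Y : {set U}).

Lemma sum_setU1 (V : nmodType) (u : U) (P : pred {set U}) (F : {set U} -> V) :
  \sum_(C : {set U} | P C && (u \in C)) F C
  = \sum_(C : {set U} | P (u |: C) && (u \notin C)) F (u |: C).
Proof.
rewrite (reindex_onto (fun C => u |: C) (fun C => C :\ u)) /=; last first.
  by move=> C /andP[_ uC]; rewrite setD1K.
apply: eq_bigl => C; rewrite setU11 andbT; congr (_ && _).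
apply/eqP/idP => [<-|uC]; [by rewrite !inE eqxx | exact: setU1K].
Qed.

Lemma sum_sign_subsets Y :
  \sum_(C : {set U} | C \subset Y) (-1) ^+ #|C| = (Y == set0)%:R :> R.
Proof.
case: (set_0Vmem Y) => [->|[u Yu]].
  rewrite (bigD1 set0) ?sub0set //= big_pred0 ?cards0 ?addr0 ?eqxx // => C.
  by rewrite subset0 andbN.
rewrite (bigID (fun C : {set U} => u \in C)) /= sum_setU1.
have -> : (Y == set0) = false by apply/negbTE/set0Pn; exists u.
apply/eqP; rewrite addr_eq0 -sumrN; apply/eqP/eq_big => C.
  by rewrite subUset sub1set Yu.
by move=> /andP[_ uC]; rewrite cardsU1 uC exprS mulN1r.
Qed.

Lemma nonempty_sign_sum Y :
  (Y != set0)%:R = \sum_(Q : {set U} | (Q \subset Y) && (Q != set0)) - (-1) ^+ #|Q| :> R.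
Proof.
have := sum_sign_subsets Y; rewrite (bigD1 set0) ?sub0set //= cards0 expr0 sumrN.
move=> /(canRL (addKr 1)) ->.
by case: (Y == set0); rewrite /= ?addNr ?oppr0 ?addr0 ?opprK.
Qed.

End SignSums.

Section Transform.
Variables (R : nzRingType) (T : finType).
Implicit Types (A B X Y : {set T}) (g : {set T} -> R).

Lemma setU_eqT A B : (A :|: B == setT) = (~: B \subset A).
Proof.
apply/eqP/subsetP => [ABT x|sBA].
  by rewrite inE => /negbTE Bx; move/setP/(_ x): ABT; rewrite !inE Bx orbF.
apply/setP => x; rewrite !inE; case: (boolP (x \in B)) => [|Bx]; rewrite ?orbT //.
by rewrite orbF sBA ?inE.
Qed.

Lemma sum_sign_cover B Y :
  \sum_(A : {set T} | (A \subset Y) && (A :|: B == setT)) - (-1) ^+ #|A :&: B|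
  = - (B == ~: Y)%:R :> R.
Proof.
have [sBY|nsBY] := boolP (~: B \subset Y); last first.
  rewrite big_pred0 => [|A]; last first.
    by rewrite setU_eqT; apply: contraNF nsBY => /andP[sAY /subset_trans]; apply.
  suff -> : (B == ~: Y) = false by rewrite oppr0.
  by apply: contraNF nsBY => /eqP ->; rewrite setCK.
rewrite (reindex_onto (fun C => ~: B :|: C) (fun A => A :&: B)) /=; last first.
  move=> A /andP[_]; rewrite setU_eqT => sBA.
  by rewrite setUIr [~: B :|: B]setUC setUCr setIT; apply/setUidPr.
have capB C : (~: B :|: C) :&: B = C :&: B by rewrite setIUl [~: B :&: B]setIC setICr set0U.
transitivity (\sum_(C : {set T} | C \subset B :&: Y) - (-1) ^+ #|C| : R).
  apply: eq_big => C; last by case/andP=> _ /eqP ->.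
  rewrite subUset sBY setU_eqT subsetUl capB subsetI andbT andbC.
  by congr andb; apply: (sameP eqP setIidPl).
rewrite sumrN sum_sign_subsets setI_eq0 disjoints_subset eqEsubset.
by rewrite -[~: Y \subset B]setCS setCK sBY andbT.
Qed.

Lemma sum_LV_subset g Y : \sum_(A : {set T} | A \subset Y) LV g A = - g (~: Y).
Proof.
rewrite /LV (exchange_big_dep xpredT) //=.
under eq_bigr => B _ do rewrite -mulr_suml sum_sign_cover mulNr.
rewrite sumrN (bigD1 (~: Y)) //= eqxx mul1r big1 ?addr0 // => B nBY.
by rewrite (negbTE nBY) mul0r.
Qed.

Lemma sum_LV_meet g X :
  \sum_(A : {set T}) LV g A * (X :&: A != set0)%:R = g X - g set0.
Proof.
have meetE A : (X :&: A != set0)%:R = 1 - (A \subset ~: X)%:R :> R.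
  by rewrite setI_eq0 disjoint_sym disjoints_subset; case: (_ \subset _); rewrite ?subrr ?subr0.
under eq_bigr => A _ do rewrite meetE mulrBr mulr1.
rewrite sumrB [X in _ - X](eq_bigr (fun A => if A \subset ~: X then LV g A else 0)); last first.
  by move=> A _; case: (_ \subset _); rewrite ?mulr1 ?mulr0.
have sum_LV : \sum_(A : {set T}) LV g A = - g set0.
  by rewrite -setCT -sum_LV_subset; apply: eq_bigl => A; rewrite subsetT.
by rewrite -big_mkcond sum_LV sum_LV_subset setCK opprK addrC.
Qed.

End Transform.

Lemma sub_bigcapS (U : finType) (Q : {set U}) (S : {set {set U}}) : Q != set0 ->
  (Q \subset bigcapS S) = (S != set0) && (S \subset [set X : {set U} | Q \subset X]).
Proof.
rewrite /bigcapS => Q0; case: eqP => [_|_] /=; first by rewrite subset0 (negbTE Q0).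
apply/bigcapsP/subsetP => [sQ X SX|sS X SX]; first by rewrite inE sQ.
by have := sS X SX; rewrite inE.
Qed.

Section Cliques.
Variables (R : nzRingType) (T : finType) (e : rel T).
Implicit Types (A Q : {set T}) (v w x y : T).

Lemma cliqueP Q : reflect {in Q &, forall x y, x != y -> uadj e x y} (is_clique e Q).
Proof.
apply: (iffP forallP) => [cl x y Qx Qy | cl x].
  by move/implyP: (cl x) => /(_ Qx) /forallP /(_ y) /implyP /(_ Qy) /implyP.
by apply/implyP => Qx; apply/forallP => y; apply/implyP => Qy; apply/implyP; apply: cl.
Qed.

Lemma clique_setU1 v Q : v \notin Q ->
  is_clique e (v |: Q) = (Q \subset [set w | uadj e v w]) && is_clique e Q.
Proof.
move=> vNQ; apply/cliqueP/andP => [cl|[/subsetP sQ /cliqueP cl]].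
  split; last by apply/cliqueP => x y Qx Qy; apply: cl; rewrite inE ?Qx ?Qy orbT.
  apply/subsetP => w Qw; rewrite inE cl ?setU11 ?setU1r //.
  by apply: contraNneq vNQ => ->.
move=> x y; rewrite !inE => /predU1P[->|Qx] /predU1P[->|Qy]; rewrite ?eqxx //.
- by move=> _; have := sQ y Qy; rewrite inE.
- by move=> _; have := sQ x Qx; rewrite inE uadj_sym.
- exact: cl.
Qed.

Definition clique_sum A : R :=
  \sum_(Q : {set T} | (Q \subset A) && is_clique e Q) (-1) ^+ #|Q|.

Lemma clique0 : is_clique e set0.
Proof. by apply/cliqueP => x y; rewrite inE. Qed.

Lemma clique_sum0 : clique_sum set0 = 1.
Proof.
rewrite /clique_sum (bigD1 set0) ?sub0set ?clique0 //= cards0 big_pred0 ?addr0 // => Q.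
by rewrite subset0 andbC andbA andNb.
Qed.

Lemma clique_sum_setD1 A v : v \in A ->
  clique_sum A = clique_sum (A :\ v) - clique_sum (nbhd e A v).
Proof.
move=> Av; rewrite /clique_sum (bigID (fun Q : {set T} => v \in Q)) /= sum_setU1 addrC.
congr (_ + _); first by apply: eq_bigl => Q; rewrite subsetD1 andbAC.
rewrite -sumrN; apply: eq_big => [Q|Q /andP[_ vNQ]]; last first.
  by rewrite cardsU1 vNQ exprS mulN1r.
have [vQ|vNQ] := boolP (v \in Q).
  rewrite andbF; apply/esym/negbTE; apply: contraTN vQ => /andP[/subsetP sQ _].
  by apply/negP => /sQ; rewrite inE uadjxx andbF.
rewrite andbT subUset sub1set Av clique_setU1 // andbA /=; congr andb.
apply/andP/subsetP => [[/subsetP sA /subsetP sN] w Qw|sN].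
  by have := sN w Qw; rewrite !inE sA.
by split; apply/subsetP => w /sN; rewrite !inE; case/andP.
Qed.

Lemma clique_sum_CC A : chordal e -> clique_sum A = 1 - (CC e A)%:R.
Proof.
move=> chordal_e; have [n] := ubnP #|A|; elim: n A => // n IH A ltAn.
case: (set_0Vmem A) => [->|[v Av]]; first by rewrite clique_sum0 CC0 subr0.
have ltA'n : (#|A :\ v| < n)%N by move: ltAn; rewrite (cardsD1 v A) Av.
rewrite (clique_sum_setD1 Av) !IH //.
  2: exact: leq_ltn_trans (subset_leq_card (nbhd_subD1 e A v)) ltA'n.
have := chordal_nbhd_connect chordal_e (negbT (setD11 v A)); rewrite nbhd_setD1.
move=> /(CC_setD1 Av) /(congr1 (fun k => k%:R : R)); rewrite !natrD => CC_A.
by apply: (addIr (CC e A)%:R); rewrite subrK [1 - _]addrC (addrKA 1) opprK -addrA -CC_A addKr.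
Qed.

Lemma clique_MaxCliques Q :
  is_clique e Q = (MaxCliques e :&: [set K : {set T} | Q \subset K] != set0).
Proof.
apply/idP/set0Pn => [clQ|[K]].
  by have [K MK sQK] := maxset_exists clQ; exists K; rewrite !inE MK.
rewrite !inE => /andP[/maxsetp /cliqueP clK /subsetP sQK].
by apply/cliqueP => x y Qx Qy; apply: clK; apply: sQK.
Qed.

Lemma MaxCliques_neq0 : MaxCliques e != set0.
Proof.
by have [K MK _] := maxset_exists clique0; apply/set0Pn; exists K; rewrite inE.
Qed.

Lemma sum_MaxCliques_meet A :
  \sum_(S : {set {set T}} | S \subset MaxCliques e)
     - (-1) ^+ #|S| * (bigcapS S :&: A != set0)%:R = 1 - clique_sum A.
Proof.
under eq_bigr => S _ do rewrite nonempty_sign_sum mulr_sumr.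
rewrite (exchange_big_dep (fun Q : {set T} => (Q \subset A) && (Q != set0))) /=; last first.
  by move=> S Q _ /andP[sQ ->]; rewrite (subset_trans sQ) ?subsetIr.
have cliqueE Q : (Q \subset A) && (Q != set0) ->
    \sum_(S : {set {set T}} |
             [&& S \subset MaxCliques e, Q \subset bigcapS S :&: A & Q != set0])
       - (-1) ^+ #|S| * - (-1) ^+ #|Q| = (is_clique e Q)%:R * - (-1) ^+ #|Q| :> R.
  case/andP=> sQA Q0; rewrite -mulr_suml clique_MaxCliques nonempty_sign_sum.
  congr (_ * _); apply: eq_bigl => S.
  by rewrite subsetI sQA andbT Q0 andbT sub_bigcapS // subsetI -andbA (andbC (S != set0)).
rewrite (eq_bigr _ cliqueE) /clique_sum [in RHS](bigD1 set0) ?sub0set ?clique0 //=.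
rewrite cards0 expr0.
rewrite opprD addNKr -sumrN [RHS]big_mkcond [LHS]big_mkcond; apply: eq_bigr => Q _.
by case: (Q \subset A); case: (is_clique e Q); case: (Q != set0); rewrite /= ?mul1r ?mul0r.
Qed.

Lemma sum_MaxCliques_sign :
  \sum_(S : {set {set T}} | S \subset MaxCliques e) - (-1) ^+ #|S| = 0 :> R.
Proof. by rewrite sumrN sum_sign_subsets (negbTE MaxCliques_neq0) oppr0. Qed.

End Cliques.

Lemma meet_preimset (T T' : finType) (phi : T -> T') (X : {set T}) (A : {set T'}) :
  (X :&: phi @^-1: A != set0) = (phi @: X :&: A != set0).
Proof.
apply/set0Pn/set0Pn => [[x]|[y]]; rewrite !inE.
  by case/andP=> Xx Ax; exists (phi x); rewrite inE imset_f.
by case/andP=> /imsetP[x Xx ->] Ax; exists x; rewrite !inE Xx.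
Qed.

Lemma sum_MaxCliques_LV (R : comNzRingType) (T T' : finType) (e : rel T) (phi : T -> T')
    (g : {set T'} -> R) : chordal e ->
  \sum_(S : {set {set T}} | S \subset MaxCliques e) - ((-1) ^+ #|S|) * g (phi @: bigcapS S)
  = \sum_(A : {set T'}) LV g A * (CC e (phi @^-1: A))%:R.
Proof.
move=> chordal_e.
transitivity (\sum_(S : {set {set T}} | S \subset MaxCliques e)
                 - (-1) ^+ #|S| * (g (phi @: bigcapS S) - g set0)).
  under [RHS]eq_bigr do rewrite mulrBr.
  by rewrite sumrB -mulr_suml sum_MaxCliques_sign mul0r subr0.
under [RHS]eq_bigr => A _ do
  rewrite -[(CC e _)%:R](subKr 1) -clique_sum_CC // -sum_MaxCliques_meet mulr_sumr.
rewrite exchange_big /=; apply: eq_bigr => S _.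
rewrite -sum_LV_meet mulr_sumr; apply: eq_bigr => A _.
by rewrite mulrCA meet_preimset.
Qed.

Theorem lemma3p5 (R : realFieldType) (T : finType) (e : rel T) :
  chordal e ->
  (forall f : {set T} -> R,
     \sum_(S : {set {set T}} | S \subset MaxCliques e)
        - ((-1) ^+ #|S|) * f (bigcapS S)
     = \sum_(A : {set T}) LV f A * (CC e A)%:R)
  /\
  (forall (T' : finType) (e' : rel T') (phi : T -> T'),
     (forall x y, e x y -> e' (phi x) (phi y)) ->
     forall g : {set T'} -> R,
       \sum_(S : {set {set T}} | S \subset MaxCliques e)
          - ((-1) ^+ #|S|) * g (phi @: bigcapS S)
       = \sum_(A : {set T'}) LV g A * (CC e (phi @^-1: A))%:R).
Proof.
(* Part (c) holds for any map phi. *)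
move=> chordal_e; split=> [f|T' e' phi _ g]; last exact: sum_MaxCliques_LV.
under eq_bigr => S _ do rewrite -[bigcapS S]imset_id.
rewrite sum_MaxCliques_LV //; apply: eq_bigr => A _.
by congr (_ * (CC e _)%:R); apply/setP => x; rewrite inE.
Qed.
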